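(* Let $X$ be a set of pointed Kripke models and $\Lambda$ a normal modal logic sound with respect to $X$, such that $X_{\boldsymbol{\mathcal{L}}_{\Lambda}}$ is finite, and let $d$ be any metric on $X_{\boldsymbol{\mathcal{L}}_{\Lambda}}$. Then there exist a descriptor $D\subseteq\boldsymbol{\mathcal{L}}_{\Lambda}$, a metric $d_w\in\mathcal{D}_{(X,D)}$ and a constant $c\ge0$ such that $d_w(\boldsymbol{x}_D,\boldsymbol{y}_D)=d(\boldsymbol{x}_{\boldsymbol{\mathcal{L}}_{\Lambda}},\boldsymbol{y}_{\boldsymbol{\mathcal{L}}_{\Lambda}})+c$ for all $x,y\in X$ with $\boldsymbol{x}_{\boldsymbol{\mathcal{L}}_{\Lambda}}\neq\boldsymbol{y}_{\boldsymbol{\mathcal{L}}_{\Lambda}}$. In particular, $(X_D,d_w)$ and $(X_{\boldsymbol{\mathcal{L}}_{\Lambda}},d)$ are quasi-isometric.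
   Context: Signature: countable non-empty sets $\Phi$, $\mathcal{I}$; $\mathcal{L}$: $\varphi ::= \top\mid p\mid\neg\varphi\mid\varphi\wedge\varphi\mid\Box_i\varphi$ on pointed Kripke models, standard semantics. $\boldsymbol{\varphi}$: formulas $\Lambda$-provably equivalent to $\varphi$; $\boldsymbol{\mathcal{L}}_{\Lambda}=\{\boldsymbol{\varphi}\}$. For $D\subseteq\boldsymbol{\mathcal{L}}_{\Lambda}$: $\boldsymbol{x}_D=\{y\in X:\forall\boldsymbol{\varphi}\in D,\ y\models\varphi\iff x\models\varphi\}$, $X_D=\{\boldsymbol{x}_D:x\in X\}$. With an enumeration $\boldsymbol{\varphi}_1,\boldsymbol{\varphi}_2,\dots$ of $D$ and $w:D\to\mathbb{R}_{>0}$ with $\sum_k w(\boldsymbol{\varphi}_k)<\infty$, $d_w(\boldsymbol{x},\boldsymbol{y})=\sum_k w(\boldsymbol{\varphi}_k)d_k(\boldsymbol{x},\boldsymbol{y})$, $d_k=0$ if $x,y$ agree on $\varphi_k$ and $1$ otherwise; $\mathcal{D}_{(X,D)}$ is the set of all such $d_w$. *)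

From Stdlib Require Import Reals List ClassicalEpsilon.
From Coquelicot Require Import Coquelicot.
Set Implicit Arguments.
Open Scope R_scope.

Section Kripke.
Variables (Phi I : Type).

Inductive form : Type :=
| Top : form
| Var : Phi -> form
| Neg : form -> form
| And : form -> form -> form
| Box : I -> form -> form.

Definition Imp (a b : form) : form := Neg (And a (Neg b)).
Definition Iff (a b : form) : form := And (Imp a b) (Imp b a).

Record kmodel : Type := KModel {
  W : Type;
  Rel : I -> W -> W -> Prop;
  Val : Phi -> W -> Prop }.

Definition pointed : Type := { M : kmodel & W M }.

Fixpoint satw (M : kmodel) (w : W M) (f : form) : Prop :=
  match f with
  | Top => True
  | Var p => Val M p w
  | Neg a => ~ satw M w a
  | And a b => satw M w a /\ satw M w b
  | Box i a => forall v, Rel M i w v -> satw M v a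
  end.

Definition sat (x : pointed) (f : form) : Prop := satw (projT1 x) (projT2 x) f.

Fixpoint peval (v : form -> bool) (f : form) : bool :=
  match f with
  | Top => true
  | Var p => v (Var p)
  | Neg a => negb (peval v a)
  | And a b => andb (peval v a) (peval v b)
  | Box i a => v (Box i a)
  end.

Definition tautology (f : form) : Prop := forall v, peval v f = true.

Fixpoint subst (s : Phi -> form) (f : form) : form :=
  match f with
  | Top => Top
  | Var p => s p
  | Neg a => Neg (subst s a)
  | And a b => And (subst s a) (subst s b)
  | Box i a => Box i (subst s a)
  end.

Definition normal_logic (L : form -> Prop) : Prop :=
  (forall f, tautology f -> L f) /\
  (forall i a b, L (Imp (Box i (Imp a b)) (Imp (Box i a) (Box i b)))) /\
  (forall a b, L (Imp a b) -> L a -> L b) /\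
  (forall i a, L a -> L (Box i a)) /\
  (forall s a, L a -> L (subst s a)).

Definition sound (L : form -> Prop) (X : pointed -> Prop) : Prop :=
  forall f, L f -> forall x, X x -> sat x f.

Definition equivL (L : form -> Prop) (a b : form) : Prop := L (Iff a b).

(** A subset D of L_Lambda, represented as the (equivalence-closed) set of
    formulas whose classes lie in D. *)
Definition descriptor (L : form -> Prop) (D : form -> Prop) : Prop :=
  forall a b, equivL L a b -> D a -> D b.

Definition clsD (X : pointed -> Prop) (D : form -> Prop) (x : pointed) : pointed -> Prop :=
  fun y => X y /\ forall f, D f -> (sat y f <-> sat x f).

Definition XL (X : pointed -> Prop) : Type :=
  { S : pointed -> Prop | exists x, X x /\ S = clsD X (fun _ => True) x }.

Definition toXL (X : pointed -> Prop) (x : pointed) (Hx : X x) : XL X :=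
  exist _ (clsD X (fun _ => True) x) (ex_intro _ x (conj Hx eq_refl)).

Definition finite_type (T : Type) : Prop := exists l : list T, forall t, In t l.

Definition is_metric (T : Type) (d : T -> T -> R) : Prop :=
  (forall s t, d s t = 0 <-> s = t) /\
  (forall s t, d s t = d t s) /\
  (forall s t u, d s u <= d s t + d t u).

(** Enumeration of the classes of D: a sequence (possibly with gaps, to allow
    finite D) listing every class of D exactly once. *)
Definition enumeration (L : form -> Prop) (D : form -> Prop) (e : nat -> option form) : Prop :=
  (forall k f, e k = Some f -> D f) /\
  (forall f, D f -> exists k g, e k = Some g /\ equivL L f g) /\
  (forall k l f g, e k = Some f -> e l = Some g -> equivL L f g -> k = l).

Definition dk (f : form) (x y : pointed) : R :=
  if excluded_middle_informative (sat x f <-> sat y f) then 0 else 1.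

Definition wseq (e : nat -> option form) (w : nat -> R) (k : nat) : R :=
  match e k with Some _ => w k | None => 0 end.

Definition dw_term (e : nat -> option form) (w : nat -> R) (x y : pointed) (k : nat) : R :=
  match e k with Some f => w k * dk f x y | None => 0 end.

(** dist is a member of D_(X,D) (as a function of representatives x, y of
    x_D, y_D). *)
Definition in_DXD (L : form -> Prop) (D : form -> Prop)
    (dist : pointed -> pointed -> R) : Prop :=
  exists (e : nat -> option form) (w : nat -> R),
    enumeration L D e /\
    (forall k f, e k = Some f -> 0 < w k) /\
    ex_series (wseq e w) /\
    forall x y, dist x y = Series (dw_term e w x y).

End Kripke.

(* Let u_0, ..., u_(n-1) be the classes of X; since distinct classes
   are separated by formulas, each u_i has a characteristic formula chi_i.  Take as
   descriptor the disjunctions chi_i \/ chi_j (i <= j), i.e. the pairs {i, j}.  Two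
   distinct classes u, v disagree on chi_i \/ chi_j iff the pair contains exactly
   one of them, so for symmetric weights w whose rows all sum to rho the weighted
   distance is 2 rho - 2 w(u, v).  The weights w(u, v) = M - d(u, v) / 2 off the
   diagonal (M large for positivity), with diagonal weights bringing every row sum to
   (n + 1) M, give d_w = d + 2 n M. *)

From Pilot Require Import Defs.
From Stdlib Require Import Reals List.
From Coquelicot Require Import Coquelicot.
From Stdlib Require Import Bool Lia Lra Classical ClassicalEpsilon
  FunctionalExtensionality PropExtensionality ProofIrrelevance.
Open Scope R_scope.

Fixpoint fsum (f : nat -> R) (n : nat) : R :=
  match n with O => 0 | S m => fsum f m + f m end.

Definition iverson (b : bool) : R := if b then 1 else 0.

Lemma fsum_ext f g n : (forall k, (k < n)%nat -> f k = g k) -> fsum f n = fsum g n.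
Proof.
  induction n as [|n IH]; intros H; simpl; [reflexivity|].
  rewrite IH, H; [reflexivity | lia | intros; apply H; lia].
Qed.

Lemma fsum_plus f g n : fsum (fun k => f k + g k) n = fsum f n + fsum g n.
Proof. induction n; simpl; [lra|]. rewrite IHn; lra. Qed.

Lemma fsum_minus f g n : fsum (fun k => f k - g k) n = fsum f n - fsum g n.
Proof. induction n; simpl; [lra|]. rewrite IHn; lra. Qed.

Lemma fsum_scal_l c f n : fsum (fun k => c * f k) n = c * fsum f n.
Proof. induction n; simpl; [lra|]. rewrite IHn; lra. Qed.

Lemma fsum_const c n : fsum (fun _ => c) n = INR n * c.
Proof. induction n; simpl fsum; [simpl; lra|]. rewrite IHn, S_INR; lra. Qed.

Lemma fsum_nonneg f n : (forall k, (k < n)%nat -> 0 <= f k) -> 0 <= fsum f n.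
Proof.
  induction n; simpl; intros H; [lra|].
  assert (0 <= f n) by (apply H; lia).
  assert (0 <= fsum f n) by (apply IHn; intros; apply H; lia).
  lra.
Qed.

Lemma fsum_ge_term f n a :
  (forall k, (k < n)%nat -> 0 <= f k) -> (a < n)%nat -> f a <= fsum f n.
Proof.
  induction n; simpl; intros H Ha; [lia|].
  assert (0 <= f n) by (apply H; lia).
  destruct (Nat.eq_dec a n) as [->|Hne].
  - assert (0 <= fsum f n) by (apply fsum_nonneg; intros; apply H; lia). lra.
  - assert (f a <= fsum f n) by (apply IHn; [intros; apply H|]; lia). lra.
Qed.

Lemma fsum_delta u F n : (u < n)%nat -> fsum (fun j => iverson (u =? j)%nat * F j) n = F u.
Proof.
  induction n as [|n IH]; intros Hu; [lia|]. simpl.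
  destruct (Nat.eq_dec u n) as [->|Hne].
  - rewrite (fsum_ext _ (fun _ => 0)), fsum_const, Nat.eqb_refl; [simpl; lra|].
    intros k Hk. destruct (Nat.eqb_spec n k); [lia|]. simpl; lra.
  - rewrite IH by lia. destruct (Nat.eqb_spec u n); [lia|]. simpl; lra.
Qed.

Lemma fsum_split f a b : fsum f (a + b) = fsum f a + fsum (fun j => f (a + j)%nat) b.
Proof.
  induction b; simpl; [rewrite Nat.add_0_r; lra|].
  rewrite Nat.add_succ_r; simpl; rewrite IHb; lra.
Qed.

Lemma fsum_mul_nat f m n :
  fsum f (m * n) = fsum (fun i => fsum (fun j => f (i * n + j)%nat) n) m.
Proof.
  induction m; simpl; [reflexivity|].
  rewrite Nat.add_comm, fsum_split, IHm; reflexivity.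
Qed.

Lemma is_series_fsum a N : (forall k, (N <= k)%nat -> a k = 0) -> is_series a (fsum a N).
Proof.
  intros H.
  assert (E : forall k, (N <= k)%nat -> fsum a k = fsum a N).
  { intros k Hk; induction Hk; [reflexivity|]. simpl; rewrite IHHk, H; [lra|lia]. }
  change (is_lim_seq (sum_n a) (fsum a N)).
  apply is_lim_seq_ext_loc with (fun _ => fsum a N); [|apply is_lim_seq_const].
  exists N; intros k Hk.
  assert (sum_n a k = fsum a (S k)) as ->.
  { clear Hk; induction k; [rewrite sum_O; simpl; lra|].
    rewrite sum_Sn, IHk; reflexivity. }
  symmetry; apply E; lia.
Qed.

Ltac case_nat_tests :=
  repeat match goal with
  | |- context [(?a =? ?b)%nat] => destruct (Nat.eqb_spec a b)
  | |- context [(?a <=? ?b)%nat] => destruct (Nat.leb_spec a b)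
  | |- context [(?a <? ?b)%nat] => destruct (Nat.ltb_spec a b)
  end; subst; simpl; try lia; lra.

Lemma fsum2_delta_l u G n : (u < n)%nat ->
  fsum (fun i => fsum (fun j => iverson (u =? i)%nat * G i j) n) n = fsum (G u) n.
Proof.
  intros Hu. rewrite <- (fsum_delta u (fun i => fsum (G i) n) n Hu).
  apply fsum_ext; intros i _. apply fsum_scal_l.
Qed.

Definition in_pair (u i j : nat) : bool := ((u =? i) || (u =? j))%nat.

Lemma in_pair_inj n a b c d : (a <= b < n)%nat -> (c <= d < n)%nat ->
  (forall m, (m < n)%nat -> in_pair m a b = in_pair m c d) -> a = c /\ b = d.
Proof.
  intros Hab Hcd H.
  pose proof (H a ltac:(lia)) as Ea. pose proof (H b ltac:(lia)) as Eb.
  pose proof (H c ltac:(lia)) as Ec. pose proof (H d ltac:(lia)) as Ed.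
  unfold in_pair in *. rewrite !Nat.eqb_refl in *.
  repeat match goal with
  | E : context [(?x =? ?y)%nat] |- _ => destruct (Nat.eqb_spec x y)
  end; simpl in *; try discriminate; lia.
Qed.

Section PairCuts.
Variables (n : nat) (w : nat -> nat -> R) (rho : R).
Hypothesis w_sym : forall i j, w i j = w j i.
Hypothesis w_row : forall i, (i < n)%nat -> fsum (w i) n = rho.

Definition upper_sum (F : nat -> nat -> R) : R :=
  fsum (fun i => fsum (fun j => iverson (i <=? j)%nat * F i j) n) n.

Lemma upper_sum_in_pair u : (u < n)%nat ->
  upper_sum (fun i j => w i j * iverson (in_pair u i j)) = rho.
Proof.
  intros Hu. unfold upper_sum.
  rewrite (fsum_ext _ (fun i => fsum (fun j => iverson (u =? i)%nat * (iverson (u <=? j)%nat * w u j)) n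
                              + fsum (fun j => iverson (u =? j)%nat * (iverson (i <? u)%nat * w i u)) n)).
  2:{ intros i _. rewrite <- fsum_plus. apply fsum_ext; intros j _.
      unfold in_pair; case_nat_tests. }
  rewrite fsum_plus, fsum2_delta_l by exact Hu.
  rewrite (fsum_ext (fun i => fsum _ n) (fun i => iverson (i <? u)%nat * w i u))
    by (intros; apply fsum_delta; exact Hu).
  rewrite <- fsum_plus, <- (w_row u Hu).
  apply fsum_ext; intros j _. rewrite (w_sym j u). case_nat_tests.
Qed.

Lemma upper_sum_in_both_pairs u v : (u < n)%nat -> (v < n)%nat -> u <> v ->
  upper_sum (fun i j => w i j * iverson (in_pair u i j && in_pair v i j)) = w u v.
Proof.
  intros Hu Hv Huv. unfold upper_sum.
  rewrite (fsum_ext _ (fun i =>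
      fsum (fun j => iverson (u =? i)%nat * (iverson (v =? j)%nat * (iverson (u <=? v)%nat * w u v))) n
    + fsum (fun j => iverson (v =? i)%nat * (iverson (u =? j)%nat * (iverson (v <=? u)%nat * w v u))) n)).
  2:{ intros i _. rewrite <- fsum_plus. apply fsum_ext; intros j _.
      unfold in_pair; case_nat_tests. }
  rewrite fsum_plus, !fsum2_delta_l, !fsum_delta by assumption.
  rewrite (w_sym v u). case_nat_tests.
Qed.

Lemma upper_sum_separating u v : (u < n)%nat -> (v < n)%nat -> u <> v ->
  upper_sum (fun i j => w i j * iverson (xorb (in_pair u i j) (in_pair v i j))) = 2 * rho - 2 * w u v.
Proof.
  intros Hu Hv Huv.
  replace (2 * rho) with (rho + rho) by ring.
  rewrite <- (upper_sum_in_pair u Hu) at 1. rewrite <- (upper_sum_in_pair v Hv),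
    <- (upper_sum_in_both_pairs u v Hu Hv Huv).
  unfold upper_sum. rewrite <- fsum_scal_l, <- fsum_plus, <- fsum_minus.
  apply fsum_ext; intros i _.
  rewrite <- fsum_scal_l, <- fsum_plus, <- fsum_minus.
  apply fsum_ext; intros j _.
  destruct (in_pair u i j), (in_pair v i j); simpl; lra.
Qed.

End PairCuts.

Section PairWeights.
Variables (n : nat) (dist : nat -> nat -> R).
Hypothesis dist_nonneg : forall i j, 0 <= dist i j.
Hypothesis dist_sym : forall i j, dist i j = dist j i.

Definition weight_scale : R := 1 + fsum (fun i => fsum (dist i) n) n.

Definition pair_weight (i j : nat) : R :=
  weight_scale - dist i j / 2 + iverson (i =? j)%nat * (weight_scale + fsum (dist i) n / 2).

Lemma dist_le_weight_scale i j : (i < n)%nat -> (j < n)%nat -> dist i j < weight_scale.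
Proof.
  intros Hi Hj. unfold weight_scale.
  assert (dist i j <= fsum (dist i) n) by (apply fsum_ge_term; auto).
  assert (fsum (dist i) n <= fsum (fun i => fsum (dist i) n) n).
  { apply (fsum_ge_term (fun i => fsum (dist i) n)); auto.
    intros; apply fsum_nonneg; auto. }
  lra.
Qed.

Lemma weight_scale_ge_1 : 1 <= weight_scale.
Proof.
  unfold weight_scale.
  assert (0 <= fsum (fun i => fsum (dist i) n) n) by (apply fsum_nonneg; intros; apply fsum_nonneg; auto).
  lra.
Qed.

Lemma pair_weight_sym i j : pair_weight i j = pair_weight j i.
Proof.
  unfold pair_weight. rewrite dist_sym.
  case_nat_tests.
Qed.

Lemma pair_weight_pos i j : (i < n)%nat -> (j < n)%nat -> 0 < pair_weight i j.
Proof.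
  intros Hi Hj. unfold pair_weight.
  pose proof (dist_le_weight_scale i j Hi Hj).
  assert (0 <= fsum (dist i) n) by (apply fsum_nonneg; auto).
  pose proof (dist_nonneg i j).
  destruct (i =? j)%nat; simpl; lra.
Qed.

Lemma pair_weight_row i : (i < n)%nat -> fsum (pair_weight i) n = (INR n + 1) * weight_scale.
Proof.
  intros Hi. unfold pair_weight.
  rewrite fsum_plus, fsum_minus, fsum_const, fsum_delta by exact Hi.
  rewrite (fsum_ext (fun j => dist i j / 2) (fun j => / 2 * dist i j)), fsum_scal_l
    by (intros; lra).
  lra.
Qed.

Lemma upper_sum_pair_weight_separating u v : (u < n)%nat -> (v < n)%nat -> u <> v ->
  upper_sum n (fun i j => pair_weight i j * iverson (xorb (in_pair u i j) (in_pair v i j)))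
  = 2 * INR n * weight_scale + dist u v.
Proof.
  intros Hu Hv Huv.
  rewrite (upper_sum_separating n pair_weight ((INR n + 1) * weight_scale))
    by (auto using pair_weight_sym, pair_weight_row).
  unfold pair_weight. destruct (Nat.eqb_spec u v); [contradiction|]. simpl; lra.
Qed.

End PairWeights.

Set Implicit Arguments.

Section Semantics.
Variables Phi I : Type.
Implicit Types (x y z : pointed Phi I) (a b f : form Phi I).

Definition Or a b : form Phi I := Neg (Defs.And (Neg a) (Neg b)).

Fixpoint bigAnd (F : nat -> form Phi I) (n : nat) : form Phi I :=
  match n with O => Top _ _ | S m => Defs.And (bigAnd F m) (F m) end.

Lemma sat_Or x a b : sat x (Or a b) <-> sat x a \/ sat x b.
Proof.
  unfold sat; simpl.
  destruct (classic (satw (projT1 x) (projT2 x) a)); tauto.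
Qed.

Lemma sat_Iff x a b : sat x (Iff a b) -> (sat x a <-> sat x b).
Proof.
  unfold sat; simpl.
  destruct (classic (satw (projT1 x) (projT2 x) a)),
    (classic (satw (projT1 x) (projT2 x) b)); tauto.
Qed.

Lemma sat_bigAnd x F n : sat x (bigAnd F n) <-> forall j, (j < n)%nat -> sat x (F j).
Proof.
  induction n as [|n IH]; unfold sat in *; simpl; [split; auto; intros; lia|].
  rewrite IH. split.
  - intros [H1 H2] j Hj. destruct (Nat.eq_dec j n) as [->|]; auto. apply H1; lia.
  - intros H; split; auto.
Qed.

Lemma dk_iverson f x y (p q : bool) :
  (sat x f <-> p = true) -> (sat y f <-> q = true) -> dk f x y = iverson (xorb p q).
Proof.
  intros Hp Hq. unfold dk.
  destruct (excluded_middle_informative _) as [H|H]; rewrite Hp, Hq in H;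
    destruct p, q; simpl; try reflexivity; exfalso; intuition congruence.
Qed.

End Semantics.

Section ProvableEquivalence.
Variables (Phi I : Type) (L : form Phi I -> Prop).
Hypothesis HL : normal_logic L.

Lemma equivL_refl a : equivL L a a.
Proof.
  destruct HL as [Ht _]. apply Ht. intro v; simpl. destruct (peval v a); reflexivity.
Qed.

Lemma equivL_sym a b : equivL L a b -> equivL L b a.
Proof.
  destruct HL as [Ht [_ [Hmp _]]]. intros H. apply (Hmp (Iff a b)); auto.
  apply Ht. intro v; simpl. destruct (peval v a), (peval v b); reflexivity.
Qed.

Lemma equivL_trans a b c : equivL L a b -> equivL L b c -> equivL L a c.
Proof.
  destruct HL as [Ht [_ [Hmp _]]]. intros H1 H2. apply (Hmp (Iff b c)); auto.
  apply (Hmp (Iff a b)); auto.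
  apply Ht. intro v; simpl. destruct (peval v a), (peval v b), (peval v c); reflexivity.
Qed.

Definition generated (e : nat -> option (form Phi I)) : form Phi I -> Prop :=
  fun f => exists k g, e k = Some g /\ equivL L g f.

Lemma generated_enumeration e :
  (forall k l f g, e k = Some f -> e l = Some g -> equivL L f g -> k = l) ->
  descriptor L (generated e) /\ enumeration L (generated e) e.
Proof.
  intros He. split; [|split; [|split]].
  - intros a b Hab (k & g & Hk & Hg). exists k, g. split; auto. eapply equivL_trans; eauto.
  - intros k f Hk. exists k, f. split; auto. apply equivL_refl.
  - intros f (k & g & Hk & Hg). exists k, g. split; auto. apply equivL_sym; auto.
  - exact He.
Qed.

End ProvableEquivalence.

Lemma in_DXD_finite_support Phi I (L D : form Phi I -> Prop) e w N :
  enumeration L D e -> (forall k f, e k = Some f -> 0 < w k) ->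
  (forall k, (N <= k)%nat -> e k = None) ->
  in_DXD L D (fun x y => Series (dw_term e w x y)).
Proof.
  intros He Hw HN. exists e, w. split; [exact He | split; [exact Hw | split; [| reflexivity]]].
  exists (fsum (wseq e w) N). apply is_series_fsum.
  intros k Hk. unfold wseq. rewrite HN; auto.
Qed.

Lemma sound_equivL Phi I (L : form Phi I -> Prop) X a b :
  sound L X -> equivL L a b -> forall z, X z -> (sat z a <-> sat z b).
Proof. intros Hs Hab z Hz. apply sat_Iff, (Hs _ Hab z Hz). Qed.

Section Classes.
Variables (Phi I : Type) (X : pointed Phi I -> Prop).
Implicit Types (x y z : pointed Phi I).

Definition cls x : pointed Phi I -> Prop := clsD X (fun _ => True) x.

Lemma cls_sat x y f : X x -> cls x = cls y -> (sat x f <-> sat y f).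
Proof.
  intros Hx E. assert (H : cls x x) by (split; auto; tauto).
  rewrite E in H. apply (proj2 H f Logic.I).
Qed.

Lemma cls_separating x y : cls x <> cls y -> exists f, sat x f /\ ~ sat y f.
Proof.
  intros H. apply NNPP; intros Hn. apply H.
  assert (E : forall f, sat x f <-> sat y f).
  { intros f. split; intros Hf; apply NNPP; intros Hf'; apply Hn.
    - exists f; auto.
    - exists (Neg f). unfold sat in *; simpl; auto. }
  extensionality z. apply propositional_extensionality.
  unfold cls, clsD. split; intros [Hz Hf]; split; auto; intros f _;
    rewrite (Hf f Logic.I); [|symmetry]; apply E.
Qed.

Lemma toXL_cls x y (Hx : X x) (Hy : X y) : cls x = cls y -> toXL X x Hx = toXL X y Hy.
Proof. intros E. apply subset_eq_compat. exact E. Qed.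

Definition trivial_pointed : pointed Phi I :=
  existT _ (@KModel Phi I unit (fun _ _ _ => False) (fun _ _ => False)) tt.

Lemma list_class_representatives (l : list (XL X)) :
  exists n (r : nat -> pointed Phi I),
    (forall i, (i < n)%nat -> X (r i)) /\
    (forall i j, (i < n)%nat -> (j < n)%nat -> cls (r i) = cls (r j) -> i = j) /\
    (forall t, In t l -> exists i, (i < n)%nat /\ proj1_sig t = cls (r i)).
Proof.
  induction l as [|t l IH].
  - exists O, (fun _ => trivial_pointed). repeat split; intros; try lia. contradiction.
  - destruct IH as (n & r & Hin & Hinj & Hcov). destruct t as [S0 (x & Hx & ES)].
    destruct (classic (exists i, (i < n)%nat /\ cls x = cls (r i))) as [(i & Hi & Ei)|Hnew].
    + exists n, r. repeat split; auto.
      intros t [<-|Ht]; auto. exists i; split; auto. simpl; rewrite ES; auto.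
    + exists (S n), (fun i => if (i =? n)%nat then x else r i). repeat split.
      * intros i Hi. destruct (Nat.eqb_spec i n); auto. apply Hin; lia.
      * intros i j Hi Hj. destruct (Nat.eqb_spec i n), (Nat.eqb_spec j n); try lia;
          intros E; [exfalso; apply Hnew; exists j | exfalso; apply Hnew; exists i |];
          try (split; [lia | auto]). apply Hinj; auto; lia.
      * intros t [<-|Ht].
        -- exists n; split; [lia|]. rewrite Nat.eqb_refl; exact ES.
        -- destruct (Hcov t Ht) as (i & Hi & E). exists i; split; [lia|].
           destruct (Nat.eqb_spec i n); [lia | exact E].
Qed.

Lemma finite_class_representatives : finite_type (XL X) ->
  exists n (r : nat -> pointed Phi I),
    (forall i, (i < n)%nat -> X (r i)) /\
    (forall i j, (i < n)%nat -> (j < n)%nat -> cls (r i) = cls (r j) -> i = j) /\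
    (forall x, X x -> exists u, (u < n)%nat /\ cls x = cls (r u)).
Proof.
  intros [l Hl]. destruct (list_class_representatives l) as (n & r & Hin & Hinj & Hcov).
  exists n, r. repeat split; auto.
  intros x Hx. exact (Hcov (toXL X x Hx) (Hl _)).
Qed.

Lemma exists_isolating_formula x (r : nat -> pointed Phi I) n :
  exists f, sat x f /\ forall j, (j < n)%nat -> cls x <> cls (r j) -> ~ sat (r j) f.
Proof.
  assert (Hsep : forall j, exists f, sat x f /\ (cls x <> cls (r j) -> ~ sat (r j) f)).
  { intros j. destruct (classic (cls x = cls (r j))) as [E|E].
    - exists (Top _ _). split; [exact Logic.I | tauto].
    - destruct (cls_separating E) as (f & H1 & H2). exists f; auto. }
  destruct (choice _ Hsep) as [sep Hsep'].
  exists (bigAnd sep n). rewrite sat_bigAnd. split.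
  - intros j _. apply Hsep'.
  - intros j Hj Hne H. rewrite sat_bigAnd in H. exact (proj2 (Hsep' j) Hne (H j Hj)).
Qed.

Lemma characteristic_formulas (r : nat -> pointed Phi I) n :
  (forall i j, (i < n)%nat -> (j < n)%nat -> cls (r i) = cls (r j) -> i = j) ->
  exists chi : nat -> form Phi I, forall i u z, (i < n)%nat -> (u < n)%nat ->
    X z -> cls z = cls (r u) -> (sat z (chi i) <-> u = i).
Proof.
  intros Hinj.
  destruct (choice _ (fun i => exists_isolating_formula (r i) r n)) as [chi Hchi].
  exists chi. intros i u z Hi Hu Hz Ez. rewrite (cls_sat _ Hz Ez). split.
  - intros H. destruct (Nat.eq_dec u i) as [|Hne]; auto. exfalso.
    refine (proj2 (Hchi i) u Hu _ H). intros E. apply Hne. symmetry. apply Hinj; auto.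
  - intros ->. apply Hchi.
Qed.

(* The value 0 outside X is junk. *)
Definition lift_dist (d : XL X -> XL X -> R) x y : R :=
  match excluded_middle_informative (X x), excluded_middle_informative (X y) with
  | left Hx, left Hy => d (toXL X x Hx) (toXL X y Hy)
  | _, _ => 0
  end.

Section LiftedMetric.
Variable d : XL X -> XL X -> R.
Hypothesis Hd : is_metric d.

Lemma lift_dist_toXL x y (Hx : X x) (Hy : X y) : lift_dist d x y = d (toXL X x Hx) (toXL X y Hy).
Proof.
  unfold lift_dist.
  destruct (excluded_middle_informative (X x)) as [Hx'|]; [|contradiction].
  destruct (excluded_middle_informative (X y)) as [Hy'|]; [|contradiction].
  rewrite (toXL_cls Hx' Hx eq_refl), (toXL_cls Hy' Hy eq_refl); reflexivity.
Qed.

Lemma lift_dist_sym x y : lift_dist d x y = lift_dist d y x.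
Proof.
  unfold lift_dist. destruct Hd as (_ & Hsym & _).
  destruct (excluded_middle_informative (X x)), (excluded_middle_informative (X y)); auto.
Qed.

Lemma lift_dist_nonneg x y : 0 <= lift_dist d x y.
Proof.
  unfold lift_dist. destruct Hd as (H0 & Hsym & Htri).
  destruct (excluded_middle_informative (X x)), (excluded_middle_informative (X y)); try lra.
  set (s := toXL X x _). set (t := toXL X y _).
  pose proof (Htri s t s). rewrite (proj2 (H0 s s) eq_refl), (Hsym t s) in H. lra.
Qed.

End LiftedMetric.
End Classes.

Lemma pair_index_spec n i j : (j < n)%nat -> ((i * n + j) / n = i /\ (i * n + j) mod n = j)%nat.
Proof.
  intros Hj. assert (n <> 0)%nat by lia. split.
  - rewrite Nat.div_add_l, Nat.div_small by auto. lia.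
  - rewrite Nat.add_comm, Nat.Div0.mod_add. apply Nat.mod_small; auto.
Qed.

Lemma pair_index_bound n k : (k < n * n)%nat -> (k / n < n /\ k mod n < n)%nat.
Proof.
  intros Hk. assert (n <> 0)%nat by nia. split.
  - apply Nat.Div0.div_lt_upper_bound; nia.
  - apply Nat.mod_upper_bound; auto.
Qed.

Section PairEnumeration.
Variables (Phi I : Type) (X : pointed Phi I -> Prop) (n : nat) (r : nat -> pointed Phi I).
Variable chi : nat -> form Phi I.
Hypothesis r_in : forall i, (i < n)%nat -> X (r i).
Hypothesis chi_char : forall i u z, (i < n)%nat -> (u < n)%nat ->
  X z -> cls X z = cls X (r u) -> (sat z (chi i) <-> u = i).

(* The index k < n * n codes the pair (k / n, k mod n); only pairs i <= j are listed. *)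
Definition pair_enum (k : nat) : option (form Phi I) :=
  if ((k <? n * n) && (k / n <=? k mod n))%nat
  then Some (Or (chi (k / n)) (chi (k mod n))) else None.

Lemma pair_enum_Some k f : pair_enum k = Some f ->
  (k / n < n /\ k mod n < n /\ k / n <= k mod n)%nat /\ f = Or (chi (k / n)) (chi (k mod n)).
Proof.
  unfold pair_enum. destruct (Nat.ltb_spec k (n * n)) as [Hk|]; [|discriminate].
  destruct (Nat.leb_spec (k / n) (k mod n)); [|discriminate]. intros [= <-].
  pose proof (pair_index_bound n Hk). repeat split; lia.
Qed.

Lemma pair_enum_beyond k : (n * n <= k)%nat -> pair_enum k = None.
Proof. intros H. unfold pair_enum. destruct (Nat.ltb_spec k (n * n)); [lia | reflexivity]. Qed.

Lemma sat_pair i j u z : (i < n)%nat -> (j < n)%nat -> (u < n)%nat ->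
  X z -> cls X z = cls X (r u) -> (sat z (Or (chi i) (chi j)) <-> in_pair u i j = true).
Proof.
  intros Hi Hj Hu Hz Ez. unfold in_pair.
  rewrite sat_Or, (chi_char Hi Hu Hz Ez), (chi_char Hj Hu Hz Ez), orb_true_iff, !Nat.eqb_eq.
  split; intros [H|H]; auto.
Qed.

Lemma pair_enum_inj k l f g : pair_enum k = Some f -> pair_enum l = Some g ->
  (forall z, X z -> (sat z f <-> sat z g)) -> k = l.
Proof.
  intros Hk Hl Hfg.
  destruct (pair_enum_Some k Hk) as [(Hk1 & Hk2 & Hk3) ->].
  destruct (pair_enum_Some l Hl) as [(Hl1 & Hl2 & Hl3) ->].
  assert (Hm : forall m, (m < n)%nat -> in_pair m (k / n) (k mod n) = in_pair m (l / n) (l mod n)).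
  { intros m Hm. apply eq_true_iff_eq.
    rewrite <- (sat_pair Hk1 Hk2 Hm (r_in Hm) eq_refl), <- (sat_pair Hl1 Hl2 Hm (r_in Hm) eq_refl).
    auto. }
  destruct (in_pair_inj _ _ _ _ _ (conj Hk3 Hk2) (conj Hl3 Hl2) Hm) as [E1 E2].
  rewrite (Nat.div_mod_eq k n), (Nat.div_mod_eq l n), E1, E2. reflexivity.
Qed.

Lemma Series_dw_term_pair_enum (w : nat -> nat -> R) x y u v :
  (u < n)%nat -> (v < n)%nat -> X x -> X y -> cls X x = cls X (r u) -> cls X y = cls X (r v) ->
  Series (dw_term pair_enum (fun k => w (k / n)%nat (k mod n)) x y)
  = upper_sum n (fun i j => w i j * iverson (xorb (in_pair u i j) (in_pair v i j))).
Proof.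
  intros Hu Hv Hx Hy Ex Ey.
  assert (Hsupp : forall k, (n * n <= k)%nat ->
            dw_term pair_enum (fun k => w (k / n)%nat (k mod n)) x y k = 0)
    by (intros k Hk; unfold dw_term; rewrite pair_enum_beyond; auto).
  rewrite (is_series_unique _ _ (is_series_fsum _ _ Hsupp)).
  rewrite fsum_mul_nat. apply fsum_ext; intros i Hi; apply fsum_ext; intros j Hj.
  destruct (pair_index_spec i Hj) as [Ei Ej].
  unfold dw_term, pair_enum. rewrite Ei, Ej.
  replace (i * n + j <? n * n)%nat with true by (symmetry; apply Nat.ltb_lt; nia).
  destruct (Nat.leb_spec i j); simpl; [|lra].
  rewrite (dk_iverson _ _ _ (sat_pair Hi Hj Hu Hx Ex) (sat_pair Hi Hj Hv Hy Ey)). lra.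
Qed.

End PairEnumeration.

Theorem proposition18
  (Phi I : Type)
  (HPhi_count : exists f : Phi -> nat, forall a b, f a = f b -> a = b)
  (HPhi_ne : inhabited Phi)
  (HI_count : exists f : I -> nat, forall a b, f a = f b -> a = b)
  (HI_ne : inhabited I)
  (X : pointed Phi I -> Prop)
  (L : form Phi I -> Prop)
  (HL : normal_logic L)
  (Hsound : sound L X)
  (Hfin : finite_type (XL X))
  (d : XL X -> XL X -> R)
  (Hd : is_metric d) :
  exists (D : form Phi I -> Prop) (dw : pointed Phi I -> pointed Phi I -> R) (c : R),
    descriptor L D /\ in_DXD L D dw /\ 0 <= c /\
    forall (x y : pointed Phi I) (Hx : X x) (Hy : X y),
      clsD X (fun _ => True) x <> clsD X (fun _ => True) y ->
      dw x y = d (@toXL Phi I X x Hx) (@toXL Phi I X y Hy) + c.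
Proof.
  destruct (finite_class_representatives Hfin) as (n & r & Hr_in & Hr_inj & Hr_cov).
  destruct (characteristic_formulas r Hr_inj) as [chi Hchi].
  set (dist i j := lift_dist d (r i) (r j)).
  assert (dist_nonneg : forall i j, 0 <= dist i j) by (intros; apply lift_dist_nonneg, Hd).
  assert (dist_sym : forall i j, dist i j = dist j i) by (intros; apply lift_dist_sym, Hd).
  set (e := pair_enum n chi).
  set (w k := pair_weight n dist (k / n)%nat (k mod n)).
  destruct (generated_enumeration HL e) as [HD He].
  { intros k l f g Hk Hl Hfg.
    exact (pair_enum_inj r chi Hr_in Hchi k l Hk Hl (sound_equivL _ _ Hsound Hfg)). }
  exists (generated L e), (fun x y => Series (dw_term e w x y)), (2 * INR n * weight_scale n dist).
  split; [exact HD | split; [| split]].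
  - apply (@in_DXD_finite_support _ _ _ _ _ w (n * n) He); [| apply pair_enum_beyond].
    intros k f Hk. destruct (pair_enum_Some n chi k Hk) as [(Hi & Hj & _) _].
    apply pair_weight_pos; auto.
  - pose proof (pos_INR n). pose proof (weight_scale_ge_1 n dist dist_nonneg).
    apply Rmult_le_pos; lra.
  - intros x y Hx Hy Hne.
    destruct (Hr_cov x Hx) as (u & Hu & Eu), (Hr_cov y Hy) as (v & Hv & Ev).
    assert (Huv : u <> v) by (intros ->; apply Hne; change (cls X x = cls X y); congruence).
    cbv beta; unfold e, w.
    rewrite (Series_dw_term_pair_enum r chi Hchi _ Hu Hv Hx Hy Eu Ev).
    rewrite upper_sum_pair_weight_separating by auto.
    unfold dist. rewrite (lift_dist_toXL d _ _ (Hr_in u Hu) (Hr_in v Hv)).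
    rewrite <- (toXL_cls Hx (Hr_in u Hu) Eu), <- (toXL_cls Hy (Hr_in v Hv) Ev). lra.
Qed.
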